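(* Let $\mathfrak R$ be either a cubical iterated graph system $\mathfrak R\subseteq\mathfrak R(d_*,L_*,s_* )$ (with $L_*$ its parameter), or the Sierpiński gasket or pentagonal Sierpiński carpet iterated graph system (with $L_*:=2$), and let $G_m$ be its replacement graphs. Then for all types $t$ of $\mathfrak R$ and all $m\in\mathbb N$, \[ d_{G_m}\!\left(I_{t,-}^{(m)},I_{t,+}^{(m)}\right)\ge\frac12\cdot L_*^m, \] where $I_{t,\star}^{(m)}:=(I_{t,\star})^m\subseteq W_m$ and $d_{G_m}(A,B)=\min\{d_{G_m}(a,b):a\in A,b\in B\}$.
   Context: Graphs: $(V,E)$, $V$ finite non-empty, $E\subseteq V\times V$, $(x,y)\in E\Rightarrow(y,x)\notin E$; $d_G$ is the shortest-path metric in the underlying undirected graph. An iterated graph system (IGS) $\mathfrak R$ consists of a connected graph $G_1=(S,E)$, a finite set $\mathcal T$ of types, a surjective typing $\mathfrak t:E\to\mathcal T$ and non-empty gluing rules $I_t\subseteq S\times S$; $I_{t,+}=\{w:(w,v)\in I_t\text{ for some }v\}$ and $I_{t,-}=\{v:(w,v)\in I_t\text{ for some }w\}$. With $W_m=S^m$, $[w]_k=w_1\cdots w_k$, the replacement graphs $G_m=(W_m,E_m)$ are defined recursively: $(w,v)\in E_{m+1}$ iff either (1) $[w]_m=[v]_m$ and $(w_{m+1},v_{m+1})\in E$ (type $\mathfrak t(w_{m+1},v_{m+1})$), or (2) $([w]_m,[v]_m)\in E_m$ and $(w_{m+1},v_{m+1})\in I_{\mathfrak t([w]_m,[v]_m)}$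 (type $\mathfrak t([w]_m,[v]_m)$). Mapping of IGS $\varphi:\mathfrak R\to\mathfrak R'$: graph mapping $G_1\to G_1'$ (edges to edges or collapsed) with (i) if $\varphi(w_1)=\varphi(v_1)$ for an edge $\{w_1,v_1\}$ of type $t$ then $\varphi(w_2)=\varphi(v_2)$ for all $(w_2,v_2)\in I_t$; (ii) if $(w_1,v_1)\in E$ has type $t$ and $(\varphi(w_1),\varphi(v_1))\in E'$ has type $t'$ then $(\varphi(w_2),\varphi(v_2))\in I'_{t'}$ for all $(w_2,v_2)\in I_t$; (iii) if $(w_1,v_1)\in E$ has type $t$ and $(\varphi(v_1),\varphi(w_1))\in E'$ has type $t'$ then $(\varphi(v_2),\varphi(w_2))\in I'_{t'}$ for all $(w_2,v_2)\in I_t$. Isomorphism of IGS: graph isomorphism with it and its inverse mappings of IGS; sub-system: $S\subseteq S'$, same types, inclusion a mapping of IGS. Cubical IGS: for integers $d_*\ge1,s_*\ge1,L_*\ge3$, $\mathfrak R(d_*,L_*,s_* )$ has symbols $\{1,\dots,L_*\}^{d_*}\times\{\underline1,\dots,\underline{s_*}\}$ with coordinates $c_i$ and sheet $s$; types $t_1,\dots,t_{d_*}$; $(w,v)$ is an edge of type $t_j$ iff $c_i(v)=c_i(w)$ ($i\ne j$), $c_j(v)=c_j(w)+1$; $(w,v)\in I_{t_j}$ iff $c_i(w)=c_i(v)$ ($i\ne j$), $(c_j(w),c_j(v))=(L_*,1)$, $s(w)=s(v)$. Sheet- and other-coordinate-preserving maps: $\eta_j:c_j\mapsto L_*+1-c_j$;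 $\alpha^+_{j,k}$ ($j\ne k$) swaps $c_j,c_k$; $\alpha^-_{j,k}$: $c_k\mapsto L_*+1-c_j$, $c_j\mapsto L_*+1-c_k$; $\mathcal G$ the set of these. A cubical IGS is a sub-system $\mathfrak R\subseteq\mathfrak R(d_*,L_*,s_* )$ with (C1) for each $j$, every symbol with $c_i\in\{1,L_*\}$ for all $i\ne j$ and sheet $\underline1$ (condition $(\ast_j)$) is in $S(\mathfrak R)$; (C2) if $w,v$ satisfy $(\ast_j)$, agree off coordinate $j$, and $c_j(v)=c_j(w)+1$, then $(w,v)\in E(\mathfrak R)$; (C3) if $w,v$ satisfy $(\ast_j)$, agree off coordinate $j$, and $(c_j(w),c_j(v))=(L_*,1)$, then $(w,v)\in I_{t_j}(\mathfrak R)$; (C4) each $\alpha\in\mathcal G$ restricts to an isomorphism of IGS $\mathfrak R\to\mathfrak R$. Sierpiński gasket: $S=\{0,1,2\}$, $E=\{(0,1),(1,2),(0,2)\}$ of types $a,b,c$, $I_a=\{(1,0)\}$, $I_b=\{(2,1)\}$, $I_c=\{(2,0)\}$. Pentagonal Sierpiński carpet: $S=\{0,\dots,4\}$, $E=\{(0,1),(1,2),(2,3),(3,4),(4,0)\}$ of types $a,b,c,d,e$, $I_a=\{(1,0),(2,4)\}$, $I_b=\{(2,1),(3,0)\}$, $I_c=\{(3,2),(4,1)\}$, $I_d=\{(4,3),(0,2)\}$, $I_e=\{(0,4),(1,3)\}$. *)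

From mathcomp Require Import all_boot.
Set Implicit Arguments.
Unset Strict Implicit.
Unset Printing Implicit Defensive.

(* Iterated graph systems.  An IGS lives on an ambient finite type A   *)
(* of "potential symbols"; its actual symbol set is [sym R] : {set A}. *)
(* Types form a finite type T.  [edge] is the edge relation E of G_1,  *)
(* [typ] the typing (only its values on edges matter), [glue t] = I_t. *)
Record igs (A T : finType) := IGS {
  sym  : {set A};
  edge : rel A;
  typ  : A -> A -> T;
  glue : T -> rel A
}.

Section IGS.
Variables (A T : finType).
Implicit Types R : igs A T.

Definition uadj1 R : rel A :=
  fun x y => [&& x \in sym R, y \in sym R & (edge R x y || edge R y x)].

Definition is_igs R : Prop :=
  [/\ sym R != set0,
      (forall x y, edge R x y -> (x \in sym R) && (y \in sym R)) /\
      (forall t x y, glue R t x y -> (x \in sym R) && (y \in sym R)) /\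
      (forall x y, edge R x y -> ~~ edge R y x),
      (forall x y, x \in sym R -> y \in sym R -> connect (uadj1 R) x y),
      (forall t : T, exists w v, edge R w v /\ typ R w v = t) &
      (forall t : T, exists w v, glue R t w v)].

(* type of the edge (w,v) of G_m (None if not an edge), on REVERSED
   words: the head of the list is the last letter w_m. *)
Fixpoint rtype R (w v : seq A) : option T :=
  match w, v with
  | a :: w', b :: v' =>
      if w' == v' then (if edge R a b then Some (typ R a b) else None)
      else match rtype R w' v' with
           | Some t => if glue R t a b then Some t else None
           | None => None
           end
  | _, _ => None
  end.

(* words w = w_1 ... w_m are lists [:: w_1; ...; w_m] *)
Definition Wm R (m : nat) : pred (seq A) :=
  fun w => (size w == m) && all (fun x => x \in sym R) w.

(* (w,v) is an edge of G_m (the size m is checked by Wm) *)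
Definition Gedge R : rel (seq A) := fun w v => rtype R (rev w) (rev v) != None.

Definition Gadj R (m : nat) : rel (seq A) :=
  fun w v => [&& w \in Wm R m, v \in Wm R m & (Gedge R w v || Gedge R v w)].

Definition Iplus R (t : T) : pred A := fun w => [exists v, glue R t w v].
Definition Iminus R (t : T) : pred A := fun v => [exists w, glue R t w v].

Definition Ipow (P : pred A) (m : nat) : pred (seq A) :=
  fun w => (size w == m) && all P w.

(* d_{G_m}(I_{t,-}^{(m)}, I_{t,+}^{(m)}) >= L^m / 2, i.e. every path in
   the underlying undirected graph of G_m from a point of I_{t,-}^{(m)}
   to a point of I_{t,+}^{(m)} has length n with 2 n >= L^m. *)
Definition dist_bound R (L : nat) : Prop :=
  forall (t : T) (m : nat), 1 <= m ->
  forall (a b : seq A) (p : seq (seq A)),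
    a \in Ipow (Iminus R t) m -> b \in Ipow (Iplus R t) m ->
    path (Gadj R m) a p -> last a p = b ->
    L ^ m <= 2 * size p.

End IGS.

Definition igs_map (A T A' T' : finType) (R : igs A T) (R' : igs A' T')
    (f : A -> A') : Prop :=
  [/\ {in sym R, forall x, f x \in sym R'},
      (forall w v, edge R w v ->
         f w = f v \/ edge R' (f w) (f v) \/ edge R' (f v) (f w)),
      (forall w1 v1, edge R w1 v1 -> f w1 = f v1 ->
         forall w2 v2, glue R (typ R w1 v1) w2 v2 -> f w2 = f v2),
      (forall w1 v1, edge R w1 v1 -> edge R' (f w1) (f v1) ->
         forall w2 v2, glue R (typ R w1 v1) w2 v2 ->
           glue R' (typ R' (f w1) (f v1)) (f w2) (f v2)) &
      (forall w1 v1, edge R w1 v1 -> edge R' (f v1) (f w1) ->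
         forall w2 v2, glue R (typ R w1 v1) w2 v2 ->
           glue R' (typ R' (f v1) (f w1)) (f v2) (f w2))].

Definition igs_iso (A T A' T' : finType) (R : igs A T) (R' : igs A' T')
    (f : A -> A') : Prop :=
  exists g : A' -> A,
    [/\ {in sym R, forall x, f x \in sym R'} /\
        {in sym R', forall y, g y \in sym R},
        {in sym R, forall x, g (f x) = x} /\
        {in sym R', forall y, f (g y) = y},
        {in sym R &, forall x y, uadj1 R' (f x) (f y) = uadj1 R x y},
        igs_map R R' f & igs_map R' R g].

Definition subsystem (A T : finType) (R R' : igs A T) : Prop :=
  sym R \subset sym R' /\ igs_map R R' id.

(* Cubical IGS R(d_star, L_star, s_star).  Convention: d_star = d.+1, s_star = s.+1   *)
(* (so d_star >= 1, s_star >= 1 automatically); coordinates 1..L_star are      *)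
(* represented by 'I_L (value k stands for k+1), sheets 1..s_star by      *)
(* 'I_s.+1 (sheet \underline 1 is value 0).  Type t_j is j : 'I_d.+1.  *)
Section Cube.
Variables (d L s : nat).

Definition csym := ({ffun 'I_d.+1 -> 'I_L} * 'I_s.+1)%type.
Definition cc (x : csym) (i : 'I_d.+1) : nat := x.1 i.
Definition sheet (x : csym) : nat := x.2.

Definition cedge_j (j : 'I_d.+1) (w v : csym) : bool :=
  [forall i, (i != j) ==> (cc v i == cc w i)] && (cc v j == (cc w j).+1).

Definition cglue_j (j : 'I_d.+1) (w v : csym) : bool :=
  [&& [forall i, (i != j) ==> (cc w i == cc v i)],
      (cc w j == L.-1), (cc v j == 0) & (sheet w == sheet v)].

Definition ctyp (w v : csym) : 'I_d.+1 :=
  odflt ord0 [pick j | cedge_j j w v].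

Definition Rcube : igs csym 'I_d.+1 :=
  {| sym := setT;
     edge := fun w v => [exists j, cedge_j j w v];
     typ := ctyp;
     glue := cglue_j |}.

Definition star_j (j : 'I_d.+1) (x : csym) : bool :=
  [forall i, (i != j) ==> ((cc x i == 0) || (cc x i == L.-1))] && (sheet x == 0).

Definition agree_off (j : 'I_d.+1) (w v : csym) : bool :=
  [forall i, (i != j) ==> (cc w i == cc v i)].

Definition eta_j (j : 'I_d.+1) (x : csym) : csym :=
  ([ffun i => if i == j then rev_ord (x.1 i) else x.1 i], x.2).
Definition alpha_plus (j k : 'I_d.+1) (x : csym) : csym :=
  ([ffun i => if i == j then x.1 k else if i == k then x.1 j else x.1 i], x.2).
Definition alpha_minus (j k : 'I_d.+1) (x : csym) : csym :=
  ([ffun i => if i == k then rev_ord (x.1 j)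
              else if i == j then rev_ord (x.1 k) else x.1 i], x.2).

Definition cubical (R : igs csym 'I_d.+1) : Prop :=
  [/\ is_igs R /\ subsystem R Rcube,
      (forall j x, star_j j x -> x \in sym R),
      (forall j w v, star_j j w -> star_j j v -> agree_off j w v ->
         cc v j = (cc w j).+1 -> edge R w v),
      (forall j w v, star_j j w -> star_j j v -> agree_off j w v ->
         cc w j = L.-1 -> cc v j = 0 -> glue R j w v) &
      [/\ (forall j, igs_iso R R (eta_j j)),
          (forall j k, j != k -> igs_iso R R (alpha_plus j k)) &
          (forall j k, j != k -> igs_iso R R (alpha_minus j k))]].

End Cube.

(* Sierpinski gasket: S = {0,1,2}, types a,b,c = 0,1,2.                *)
Definition gasket_edge (x y : 'I_3) : bool :=
  match nat_of_ord x, nat_of_ord y with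
  | 0, 1 | 1, 2 | 0, 2 => true | _, _ => false end.
Definition gasket_typ (x y : 'I_3) : 'I_3 :=
  match nat_of_ord x, nat_of_ord y with
  | 0, 1 => inord 0 | 1, 2 => inord 1 | _, _ => inord 2 end.
Definition gasket_glue (t : 'I_3) (x y : 'I_3) : bool :=
  match nat_of_ord t, nat_of_ord x, nat_of_ord y with
  | 0, 1, 0 => true
  | 1, 2, 1 => true
  | 2, 2, 0 => true
  | _, _, _ => false end.
Definition gasket : igs 'I_3 'I_3 :=
  {| sym := setT; edge := gasket_edge; typ := gasket_typ; glue := gasket_glue |}.

(* Pentagonal Sierpinski carpet: S = {0..4}, types a..e = 0..4.       *)
Definition pent_edge (x y : 'I_5) : bool :=
  match nat_of_ord x, nat_of_ord y with
  | 0, 1 | 1, 2 | 2, 3 | 3, 4 | 4, 0 => true | _, _ => false end.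
Definition pent_typ (x y : 'I_5) : 'I_5 :=
  match nat_of_ord x, nat_of_ord y with
  | 0, 1 => inord 0 | 1, 2 => inord 1 | 2, 3 => inord 2 | 3, 4 => inord 3
  | _, _ => inord 4 end.
Definition pent_glue (t : 'I_5) (x y : 'I_5) : bool :=
  match nat_of_ord t, nat_of_ord x, nat_of_ord y with
  | 0, 1, 0 | 0, 2, 4 => true
  | 1, 2, 1 | 1, 3, 0 => true
  | 2, 3, 2 | 2, 4, 1 => true
  | 3, 4, 3 | 3, 0, 2 => true
  | 4, 0, 4 | 4, 1, 3 => true
  | _, _, _ => false end.
Definition pentagon : igs 'I_5 'I_5 :=
  {| sym := setT; edge := pent_edge; typ := pent_typ; glue := pent_glue |}.

From mathcomp Require Import all_boot all_algebra zify ring.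
Set Implicit Arguments.
Unset Strict Implicit.
Unset Printing Implicit Defensive.
Import GRing.Theory Num.Theory.
Local Open Scope ring_scope.

(* Each bound comes from a height on words that changes by at most 1 along
   every edge of G_m and equals 0 on (I_{t,-})^m and L^m - 1 on (I_{t,+})^m
   (or the reverse), so every connecting path has length at least
   L^m - 1 >= L^m / 2.
   For a cubical system the height is the word read in base L through the
   coordinate j along which the gluing of type t happens; for the gasket it is
   the word read in base 2 through the indicator of I_{t,+}.  Both are
   Lipschitz because an edge of G_m that is not inside a cell is a carry:
   w = c a x_1..x_k, v = c b y_1..y_k with (x_i, y_i) in I_t, and each digit
   of x_i exceeds that of y_i by (base - 1) times the step from a to b.
   No letterwise digit works for the pentagon.  There each letter gets a
   binary digit relative to a frame (a rotation and a complementation flag)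
   that is updated letter by letter; the finitely many conditions making this
   code Lipschitz and extremal on the two sides are checked by computation. *)

Lemma lipschitz_path (B : Type) (e : rel B) (h : B -> int) :
  (forall x y, e x y -> `|h x - h y| <= 1) ->
  forall a p, path e a p -> `|h (last a p) - h a| <= (size p)%:Z.
Proof.
move=> h_lip a; elim/last_ind=> [|p y IH] /=; first by rewrite subrr.
rewrite rcons_path last_rcons size_rcons => /andP[/IH IHp e_y].
have := h_lip _ _ e_y; rewrite distrC; lia.
Qed.

Lemma dist_bound_of_heights (A T : finType) (R : igs A T) (L : nat) : (1 < L)%N ->
  (forall t m, exists h : seq A -> int,
     (forall w v, Gadj R m w v -> `|h w - h v| <= 1) /\
     (forall a b, a \in Ipow (Iminus R t) m -> b \in Ipow (Iplus R t) m ->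
        L%:Z ^+ m - 1 <= `|h b - h a|)) ->
  dist_bound R L.
Proof.
move=> L_gt1 heights t m m_gt0 a b p a_minus b_plus a_p b_last; subst b.
have [h [h_lip h_gap]] := heights t m.
have := h_gap _ _ a_minus b_plus; have := lipschitz_path h_lip a_p.
have : (L <= L ^ m)%N by rewrite -[X in (X <= _)%N]expn1 leq_pexp2l // ltnW.
have -> : L%:Z ^+ m = (L ^ m)%N%:Z by rewrite -!natz natrX.
lia.
Qed.

Section Radix.
Variables (A T : finType) (R : igs A T) (f : A -> int) (B : nat).

(* Words are stored last letter first, as in [rtype], so [radix (rev w)] reads
   [w] in base [B] with its last letter as least significant digit. *)
Fixpoint radix (r : seq A) : int :=
  if r is a :: r' then f a + B%:Z * radix r' else 0.

Hypothesis glue_balanced : forall a b, edge R a b ->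
  forall x y, glue R (typ R a b) x y -> f x - f y = (B%:Z - 1) * (f b - f a).
Hypothesis edge_lipschitz : forall a b, edge R a b -> `|f b - f a| <= 1.

Lemma radix_rtype w v t : rtype R w v = Some t ->
  exists a b, [/\ edge R a b, typ R a b = t & radix v - radix w = f b - f a].
Proof.
elim: w v t => [|x w IH] [|y v] t //=; case: eqP => [<- | _].
  case: ifP => // e_xy [<-]; exists x, y; split=> //; ring.
case E: (rtype R w v) => [t'|] //; case: ifP => // g_xy [<-].
have [a [b [e_ab ty_ab d_vw]]] := IH _ _ E; subst t'; exists a, b; split=> //.
have := glue_balanced e_ab g_xy; rewrite -d_vw => bal.
rewrite -[f x](subrK (f y)) bal; ring.
Qed.

Lemma radix_lipschitz m w v : Gadj R m w v -> `|radix (rev w) - radix (rev v)| <= 1.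
Proof.
have step w' v' : Gedge R w' v' -> `|radix (rev v') - radix (rev w')| <= 1.
  rewrite /Gedge; case E: rtype => [t|] // _.
  by have [a [b [e_ab _ ->]]] := radix_rtype E; apply: edge_lipschitz.
by case/and3P=> _ _ /orP[/step | /step]; rewrite // distrC.
Qed.

Lemma radix_gap (P0 P1 : pred A) m a b :
    (forall x, P0 x -> f x = 0) -> (forall x, P1 x -> f x = B%:Z - 1) ->
  a \in Ipow P0 m -> b \in Ipow P1 m ->
  B%:Z ^+ m - 1 <= `|radix (rev b) - radix (rev a)|.
Proof.
move=> f0 f1 /andP[_ a0] /andP[/eqP <- b1]; rewrite -size_rev.
rewrite -all_rev in a0; rewrite -all_rev in b1.
have -> : radix (rev a) = 0.
  by elim: (rev a) a0 => //= x r IH /andP[/f0 -> /IH ->]; rewrite mulr0 addr0.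
have -> : radix (rev b) = B%:Z ^+ size (rev b) - 1.
  elim: (rev b) b1 => [|x r IH] /=; first by rewrite subrr.
  by case/andP=> /f1 -> /IH ->; rewrite exprS; ring.
by rewrite subr0 ler_norm.
Qed.

End Radix.

Section Cube.
Variables (d L s : nat).
Local Notation cube := (Rcube d L s).
Implicit Types (x y a b : csym d L s) (j k : 'I_d.+1).

Lemma ctypP x y : edge cube x y -> cedge_j (ctyp x y) x y.
Proof. by rewrite /ctyp; case: pickP => [k //|none] /existsP [k]; rewrite none. Qed.

Lemma cube_edge_coord j k x y : cedge_j k x y -> `|(cc y j)%:Z - (cc x j)%:Z| <= 1.
Proof.
case/andP=> /forallP same /eqP y_k; case: (eqVneq j k) => [-> | jk].
  by rewrite y_k; lia.
by rewrite (eqP (implyP (same j) jk)) subrr.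
Qed.

Lemma cube_glue_coord j k x y a b : cedge_j k x y -> cglue_j k a b ->
  (cc a j)%:Z - (cc b j)%:Z = (L%:Z - 1) * ((cc y j)%:Z - (cc x j)%:Z).
Proof.
case/andP=> /forallP same_xy /eqP y_k /and4P[/forallP same_ab /eqP a_k /eqP b_k _].
have L_gt0 : (0 < L)%N by case: (a.1 j) => i /(leq_ltn_trans (leq0n i)).
case: (eqVneq j k) => [-> | jk].
  by rewrite a_k b_k y_k; lia.
by rewrite (eqP (implyP (same_xy j) jk)) (eqP (implyP (same_ab j) jk)) !subrr mulr0.
Qed.

Section SubCube.
Variable R : igs (csym d L s) 'I_d.+1.
Hypothesis R_antisym : forall x y, edge R x y -> ~~ edge R y x.
Hypothesis R_typ_onto : forall t, exists x y, edge R x y /\ typ R x y = t.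
Hypothesis R_sub : igs_map R cube id.

Lemma subcube_glue x y : edge R x y ->
  (edge cube x y /\ forall a b, glue R (typ R x y) a b -> cglue_j (ctyp x y) a b) \/
  (edge cube y x /\ forall a b, glue R (typ R x y) a b -> cglue_j (ctyp y x) b a).
Proof.
case: R_sub => _ to_cube _ glue_fwd glue_bwd e_xy.
case: (to_cube _ _ e_xy) => [xy | [f_xy | b_xy]].
- by move: e_xy (R_antisym e_xy); rewrite -xy => ->.
- by left; split=> // a b; apply: glue_fwd.
- by right; split=> // a b; apply: glue_bwd.
Qed.

Lemma subcube_glue_balanced j x y : edge R x y ->
  forall a b, glue R (typ R x y) a b ->
  (cc a j)%:Z - (cc b j)%:Z = (L%:Z - 1) * ((cc y j)%:Z - (cc x j)%:Z).
Proof.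
move=> e_xy a b g_ab; case: (subcube_glue e_xy) => [[/ctypP c_xy gl] | [/ctypP c_yx gl]].
  exact: (cube_glue_coord j c_xy (gl _ _ g_ab)).
have /(congr1 -%R) := cube_glue_coord j c_yx (gl _ _ g_ab); rewrite opprB => ->; ring.
Qed.

Lemma subcube_edge_coord j x y : edge R x y -> `|(cc y j)%:Z - (cc x j)%:Z| <= 1.
Proof.
move=> e_xy; case: (subcube_glue e_xy) => [[/ctypP c_xy _] | [/ctypP c_yx _]].
  exact: (cube_edge_coord j c_xy).
by rewrite distrC; apply: (cube_edge_coord j c_yx).
Qed.

Lemma subcube_glue_direction t : exists j,
  (forall a b, glue R t a b -> cc a j = L.-1 /\ cc b j = 0)%N \/
  (forall a b, glue R t a b -> cc a j = 0 /\ cc b j = L.-1)%N.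
Proof.
have [x [y [e_xy <-]]] := R_typ_onto t.
case: (subcube_glue e_xy) => [[_ gl] | [_ gl]];
  [exists (ctyp x y); left | exists (ctyp y x); right];
  by move=> a b /gl /and4P[_ /eqP -> /eqP ->].
Qed.

Lemma subcube_dist_bound : (1 < L)%N -> dist_bound R L.
Proof.
move=> L_gt1; apply: dist_bound_of_heights => // t m.
have [j sides] := subcube_glue_direction t.
pose f x := (cc x j)%:Z.
exists (fun w => radix f L (rev w)); split.
  by move=> w v; apply: (radix_lipschitz (subcube_glue_balanced j) (subcube_edge_coord j)).
have L_pred : (L.-1)%:Z = L%:Z - 1 by lia.
move=> a b a_minus b_plus; case: sides => sides.
  apply: (radix_gap _ _ a_minus b_plus) => x /existsP[y /sides[]].
    by rewrite /f => _ ->.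
  by rewrite /f => -> _.
rewrite distrC; apply: (radix_gap _ _ b_plus a_minus) => x /existsP[y /sides[]].
  by rewrite /f => -> _.
by rewrite /f => _ ->.
Qed.

End SubCube.
End Cube.

Lemma cubical_dist_bound d L s (R : igs (csym d L s) 'I_d.+1) :
  (1 < L)%N -> cubical R -> dist_bound R L.
Proof.
move=> L_gt1 [[[_ [_ [_ antisym]] _ typ_onto _] [_ sub]] _ _ _ _].
exact: (subcube_dist_bound antisym typ_onto sub L_gt1).
Qed.

Lemma gasket_glue_reversed a b x y :
  gasket_edge a b -> gasket_glue (gasket_typ a b) x y -> x = b /\ y = a.
Proof.
case: a b => [[|[|[|?]]] ?] [[|[|[|?]]] ?] //= _; rewrite /gasket_typ /gasket_glue /= inordK //;
  by case: x y => [[|[|[|?]]] ?] [[|[|[|?]]] ?] //= _; split; apply: val_inj.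
Qed.

Lemma gasket_sides_disjoint t x : Iminus gasket t x -> ~~ Iplus gasket t x.
Proof.
case/existsP=> w g_wx; apply/existsP=> -[v]; move: g_wx.
by case: t x w v => [[|[|[|?]]] ?] [[|[|[|?]]] ?] [[|[|[|?]]] ?] [[|[|[|?]]] ?].
Qed.

Lemma gasket_dist_bound : dist_bound gasket 2.
Proof.
apply: dist_bound_of_heights => // t m.
pose f x := (Iplus gasket t x : nat)%:Z.
exists (fun w => radix f 2 (rev w)); split.
  move=> w v; apply: radix_lipschitz.
    by move=> a b e_ab x y /(gasket_glue_reversed e_ab)[-> ->]; rewrite mul1r.
  by move=> a b _; rewrite /f; case: (Iplus _ _ a); case: (Iplus _ _ b).
move=> a b a_minus b_plus; apply: (radix_gap _ _ a_minus b_plus) => x.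
  by move/gasket_sides_disjoint; rewrite /f => /negbTE ->.
by rewrite /f => ->.
Qed.

Section Transducer.
Variables (A T Q : finType) (R : igs A T) (digit : Q -> A -> bool) (next : Q -> A -> Q).

Fixpoint frame (q : Q) (r : seq A) : Q :=
  if r is a :: r' then next (frame q r') a else q.

Fixpoint code (q : Q) (r : seq A) : int :=
  if r is a :: r' then (digit (frame q r') a)%:Z + 2 * code q r' else 0.

(* [d] is the difference of the codes of the two words to be preserved: as in
   a binary carry, the digits of every glue pair must differ by [- d]. *)
Definition conforms (t : T) (q1 q2 : Q) (d : int) : Prop :=
  forall x y, glue R t x y -> (digit q2 y)%:Z - (digit q1 x)%:Z = - d.

Hypothesis conforms_edge : forall q a b, edge R a b ->
  conforms (typ R a b) (next q a) (next q b) ((digit q b)%:Z - (digit q a)%:Z).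
Hypothesis conforms_glue : forall t q1 q2 d x y, `|d| <= 1 ->
  conforms t q1 q2 d -> glue R t x y -> conforms t (next q1 x) (next q2 y) d.

Lemma code_rtype q w v t : rtype R w v = Some t -> exists d,
  [/\ `|d| <= 1, conforms t (frame q w) (frame q v) d & code q v - code q w = d].
Proof.
elim: w v t => [|x w IH] [|y v] t //=; case: eqP => [<- | _].
  case: ifP => // e_xy [<-]; eexists; split; [ | exact: conforms_edge | ring].
  by case: (digit _ x); case: (digit _ y).
case E: (rtype R w v) => [t'|] //; case: ifP => // g_xy [<-].
have [d [d_le1 conf d_vw]] := IH _ _ E; exists d; split=> //.
  exact: conforms_glue.
have := conf _ _ g_xy; move: d_vw; lia.
Qed.

Lemma code_lipschitz q m w v : Gadj R m w v -> `|code q (rev w) - code q (rev v)| <= 1.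
Proof.
have step w' v' : Gedge R w' v' -> `|code q (rev v') - code q (rev w')| <= 1.
  rewrite /Gedge; case E: rtype => [t|] // _.
  by have [d [d_le1 _ ->]] := code_rtype q E.
by case/and3P=> _ _ /orP[/step | /step]; rewrite // distrC.
Qed.

Lemma code_const (P : pred A) (c : bool) (S : pred Q) q :
    S q -> (forall q a, S q -> P a -> digit q a = c /\ S (next q a)) ->
  forall r, all P r -> code q r = c%:Z * (2 ^+ size r - 1).
Proof.
move=> S_q S_next r P_r.
suff [] : S (frame q r) /\ code q r = c%:Z * (2 ^+ size r - 1) by [].
elim: r P_r => [|a r IH] /=; first by rewrite subrr mulr0.
case/andP=> P_a /IH [S_r ->]; have [-> ->] := S_next _ _ S_r P_a.
by rewrite exprS; split; last ring.
Qed.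

Lemma code_gap t q (S0 S1 : pred Q) m a b :
    S0 q -> (forall q x y, S0 q -> glue R t x y -> ~~ digit q y /\ S0 (next q y)) ->
    S1 q -> (forall q x y, S1 q -> glue R t x y -> digit q x /\ S1 (next q x)) ->
  a \in Ipow (Iminus R t) m -> b \in Ipow (Iplus R t) m ->
  2 ^+ m - 1 <= `|code q (rev b) - code q (rev a)|.
Proof.
move=> S0_q S0_next S1_q S1_next /andP[_ a_minus] /andP[/eqP <- b_plus].
have -> : code q (rev a) = 0.
  rewrite (@code_const (Iminus R t) false S0 q S0_q) ?mul0r ?all_rev //.
  by move=> q' y S0_q' /existsP[x /(S0_next _ _ _ S0_q') [/negbTE]].
have -> : code q (rev b) = 2 ^+ size b - 1.
  rewrite (@code_const (Iplus R t) true S1 q S1_q) ?mul1r ?all_rev ?size_rev //.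
  by move=> q' x S1_q' /existsP[y /(S1_next _ _ _ S1_q') []].
by rewrite subr0 ler_norm.
Qed.

End Transducer.

Definition all_ord n (P : pred 'I_n.+1) : bool := all (fun k => P (inZp k)) (iota 0 n.+1).

Lemma all_ordP n (P : pred 'I_n.+1) : reflect (forall i, P i) (all_ord P).
Proof.
apply: (iffP allP) => [P_all i | P_all k _]; last exact: P_all.
by have := P_all i; rewrite valZpK mem_iota ltn_ord => ->.
Qed.

(* A frame [(r, e)] turns the pentagon by [r]: the digit of [a] is [e] xor
   [a - r \in {1, 2}], and [(t, false)] makes this the indicator of I_{t,+}. *)
Definition pent_frame := ('I_5 * bool)%type.

Definition pent_offset (q : pent_frame) (a : 'I_5) : nat := (a + 5 - q.1) %% 5.

Definition pent_digit (q : pent_frame) (a : 'I_5) : bool :=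
  q.2 (+) (pent_offset q a \in [:: 1; 2]%N).

Definition pent_next (q : pent_frame) (a : 'I_5) : pent_frame :=
  match pent_offset q a with
  | 0 => (inZp (q.1 + 3), ~~ q.2)
  | 3 => (inZp (q.1 + 2), ~~ q.2)
  | _ => q
  end.

Definition all_frames (P : pred pent_frame) : bool :=
  all_ord (fun r => P (r, false) && P (r, true)).

Lemma all_framesP (P : pred pent_frame) : reflect (forall q, P q) (all_frames P).
Proof.
apply: (iffP (all_ordP _)) => [P_all [r []] | P_all r]; last by rewrite !P_all.
  by case/andP: (P_all r).
by case/andP: (P_all r).
Qed.

Definition pent_conformsb (t : 'I_5) (q1 q2 : pent_frame) (d : int) : bool :=
  all_ord (fun x => all_ord (fun y =>
    pent_glue t x y ==> ((pent_digit q2 y)%:Z - (pent_digit q1 x)%:Z == - d))).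

Lemma pent_conformsP t q1 q2 d :
  reflect (conforms pentagon pent_digit t q1 q2 d) (pent_conformsb t q1 q2 d).
Proof.
apply: (iffP (all_ordP _)) => [conf x y g_xy | conf x].
  by move/all_ordP: (conf x) => /(_ y) /implyP /(_ g_xy) /eqP.
by apply/all_ordP => y; apply/implyP => /conf ->.
Qed.

Lemma pent_typ_edge a b : pent_edge a b -> pent_typ a b = a.
Proof.
by case: a b => [[|[|[|[|[|?]]]]] ?] [[|[|[|[|[|?]]]]] ?] //= _;
  apply: val_inj; rewrite /pent_typ /= inordK.
Qed.

Lemma pent_conforms_edge q a b : pent_edge a b ->
  conforms pentagon pent_digit (pent_typ a b) (pent_next q a) (pent_next q b)
    ((pent_digit q b)%:Z - (pent_digit q a)%:Z).
Proof.
have check : all_frames (fun q => all_ord (fun a => all_ord (fun b =>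
  pent_edge a b ==> pent_conformsb a (pent_next q a) (pent_next q b)
                      ((pent_digit q b)%:Z - (pent_digit q a)%:Z)))).
  by vm_compute.
move=> e_ab; rewrite (pent_typ_edge e_ab); apply/pent_conformsP.
by move/all_framesP: check => /(_ q) /all_ordP /(_ a) /all_ordP /(_ b) /implyP /(_ e_ab).
Qed.

Lemma pent_conforms_glue t q1 q2 d x y : `|d| <= 1 ->
  conforms pentagon pent_digit t q1 q2 d -> pent_glue t x y ->
  conforms pentagon pent_digit t (pent_next q1 x) (pent_next q2 y) d.
Proof.
have check : all_ord (fun t => all_frames (fun q1 => all_frames (fun q2 => all (fun d =>
  pent_conformsb t q1 q2 d ==> all_ord (fun x => all_ord (fun y =>
    pent_glue t x y ==> pent_conformsb t (pent_next q1 x) (pent_next q2 y) d)))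
  [:: -1; 0; 1]))).
  by vm_compute.
move=> d_le1 /pent_conformsP conf g_xy; apply/pent_conformsP.
have d_in : d \in [:: -1; 0; 1] by rewrite !inE; lia.
move/all_ordP: check => /(_ t) /all_framesP /(_ q1) /all_framesP /(_ q2) /allP /(_ d d_in).
by move=> /implyP /(_ conf) /all_ordP /(_ x) /all_ordP /(_ y) /implyP /(_ g_xy).
Qed.

Definition pent_minus_low (t : 'I_5) (q : pent_frame) : bool :=
  all_ord (fun x => all_ord (fun y => pent_glue t x y ==> ~~ pent_digit q y)).

Definition pent_plus_high (t : 'I_5) (q : pent_frame) : bool :=
  all_ord (fun x => all_ord (fun y => pent_glue t x y ==> pent_digit q x)).

Lemma pent_minus_low_next t q x y : pent_minus_low t q -> pent_glue t x y ->
  ~~ pent_digit q y /\ pent_minus_low t (pent_next q y).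
Proof.
have check : all_ord (fun t => all_frames (fun q => pent_minus_low t q ==>
  all_ord (fun x => all_ord (fun y => pent_glue t x y ==> pent_minus_low t (pent_next q y))))).
  by vm_compute.
move=> low g_xy; split.
  by move: low; rewrite /pent_minus_low => /all_ordP /(_ x) /all_ordP /(_ y) /implyP /(_ g_xy).
move/all_ordP: check => /(_ t) /all_framesP /(_ q) /implyP /(_ low).
by move=> /all_ordP /(_ x) /all_ordP /(_ y) /implyP /(_ g_xy).
Qed.

Lemma pent_plus_high_next t q x y : pent_plus_high t q -> pent_glue t x y ->
  pent_digit q x /\ pent_plus_high t (pent_next q x).
Proof.
have check : all_ord (fun t => all_frames (fun q => pent_plus_high t q ==>
  all_ord (fun x => all_ord (fun y => pent_glue t x y ==> pent_plus_high t (pent_next q x))))).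
  by vm_compute.
move=> high g_xy; split.
  by move: high; rewrite /pent_plus_high => /all_ordP /(_ x) /all_ordP /(_ y) /implyP /(_ g_xy).
move/all_ordP: check => /(_ t) /all_framesP /(_ q) /implyP /(_ high).
by move=> /all_ordP /(_ x) /all_ordP /(_ y) /implyP /(_ g_xy).
Qed.

Lemma pent_start_sides t : pent_minus_low t (t, false) && pent_plus_high t (t, false).
Proof.
have check : all_ord (fun t => pent_minus_low t (t, false) && pent_plus_high t (t, false)).
  by vm_compute.
by move/all_ordP: check; apply.
Qed.

Lemma pentagon_dist_bound : dist_bound pentagon 2.
Proof.
apply: dist_bound_of_heights => // t m.
exists (fun w => code pent_digit pent_next (t, false) (rev w)); split.
  by move=> w v; apply: code_lipschitz; [exact: pent_conforms_edge | exact: pent_conforms_glue].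
have /andP[low high] := pent_start_sides t.
move=> a b; apply: (code_gap low _ high).
  exact: pent_minus_low_next.
exact: pent_plus_high_next.
Qed.

Local Close Scope ring_scope.

Theorem proposition5p20 :
  (forall (d L s : nat), 3 <= L ->
     forall R : igs (csym d L s) 'I_d.+1,
       cubical R -> dist_bound R L)
  /\ dist_bound gasket 2
  /\ dist_bound pentagon 2.
Proof.
split; last by split; [exact: gasket_dist_bound | exact: pentagon_dist_bound].
by move=> d L s L_ge3 R; apply: cubical_dist_bound; apply: ltnW.
Qed.
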